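(* Let $C>1$ and let $P$ be a probability measure on $[0,\infty)$ with mean $\mu_P\in[0,\infty]$. Then: (1) $G_{P,C}$ is continuous and concave on $[0,\infty)$; (2) $\sup_{\mu\ge0}G_{P,C}(\mu)=G_{P,C}\big(\tfrac1C m_{P}\big)$; (3) $\tfrac1C m_P\le\mu_{P,C}\le\mu_P$.
   Context: For $\mu\ge0$ define $G_{P,C}(\mu):=\mathbb{E}_{t\sim P}[\min\{t,C\mu\}]-\mu$. The $C$-clipped mean $\mu_{P,C}$ is the largest $\mu\ge0$ with $G_{P,C}(\mu)=0$ (note $G_{P,C}(0)=0$). The $\frac1C$-median is $m_P:=\sup\{M\ge0:\mathbb{P}_{t\sim P}[t\ge M]\ge\frac1C\}$ (so $\mathbb{P}_{t\sim P}[t\ge m_P]\ge\frac1C$). *)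

From HB Require Import structures.
From mathcomp Require Import all_boot all_order all_algebra.
From mathcomp Require Import all_classical all_reals all_analysis.
Set Implicit Arguments. Unset Strict Implicit. Unset Printing Implicit Defensive.
Import Order.TTheory GRing.Theory Num.Theory.
Import numFieldNormedType.Exports.
Local Open Scope classical_set_scope.
Local Open Scope ring_scope.

(* P is a probability measure on R (Borel) concentrated on [0, +oo). *)

Definition meanP (R : realType) (P : probability R R) : \bar R :=
  (\int[P]_t (t%:E))%E.

(* G_{P,C}(mu) = E_{t ~ P}[min(t, C mu)] - mu ; the expectation is finite
   (integrand is bounded on the support of P), so we take its real value. *)
Definition G_PC (R : realType) (P : probability R R) (C mu : R) : R :=
  fine (\int[P]_t ((Num.min t (C * mu))%:E))%E - mu.

Definition median_PC (R : realType) (P : probability R R) (C : R) : R :=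
  sup [set M : R | 0 <= M /\ lee (C^-1)%:E (P [set t : R | M <= t])].

From HB Require Import structures.
From mathcomp Require Import all_boot all_order all_algebra.
From mathcomp Require Import all_classical all_reals all_analysis.
From mathcomp Require Import measurable_realfun ring lra.
Import Order.TTheory GRing.Theory Num.Theory.
Import numFieldNormedType.Exports.
Local Open Scope classical_set_scope.
Local Open Scope ring_scope.

(* Write T(s) := E_P[min(t, s)] for the truncated mean, so that
   G_{P,C}(mu) = T(C mu) - mu.  Every property of G comes from properties of T,
   obtained by integrating pointwise inequalities between min(t, s), constants
   and tail indicators over the support [0, +oo) of P:  T is nondecreasing,
   1-Lipschitz and concave, T(s) <= mu_P, and moving the level from a to s
   changes T by at most (s - a) P[t > a] upwards and at least (s - a) P[t >= s]
   downwards.  Since P[t > m_P] <= 1/C <= P[t >= m_P], the function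
   s |-> T(s) - s/C peaks at s = m_P, which is (2); Lipschitz continuity and
   concavity of T give (1).  For (3) an abstract lemma shows that a concave
   Lipschitz f on [0, +oo) with f 0 = 0 that is negative somewhere has a
   largest point where f >= 0, and that this point is a zero of f.  Applied
   to G (negative far out because the tails of P vanish) it yields mu_{P,C};
   it dominates m_P / C because G(m_P / C) >= G(0) = 0, and it lies below mu_P
   because G(mu) >= 0 means mu <= T(C mu) <= mu_P. *)

Section RealFunctions.
Context {R : realType}.

Lemma lipschitz_within_continuous (A : set R) (f : R -> R) (k : R) :
  0 < k -> (forall x y, A x -> A y -> `|f x - f y| <= k * `|x - y|) ->
  {within A, continuous f}.
Proof.
move=> k_gt0 f_lip; apply/subspace_continuousP => x Ax.
apply/cvgrPdist_le => e e_gt0.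
have ek_gt0 : 0 < e / k by rewrite divr_gt0.
rewrite near_withinE; near=> t => At.
have xt_small : `|x - t| < e / k.
  by near: t; apply: (@cvgr_dist_lt _ _ _ (nbhs x) _ id x) => //; exact: cvg_id.
apply: le_trans (f_lip x t Ax At) _.
by rewrite -ler_pdivlMl // ltW // mulrC.
Unshelve. all: by end_near.
Qed.

Lemma sup_attained (A : set R) (a : R) : A a -> ubound A a -> sup A = a.
Proof.
move=> Aa ubAa; apply/eqP; rewrite eq_le; apply/andP; split.
  by apply: ge_sup => //; exists a.
by apply: sup_upper_bound => //; split; exists a.
Qed.

End RealFunctions.

Section LargestNonnegPoint.
Context {R : realType}.
Variables (f : R -> R) (k : R).
Hypothesis k_gt0 : 0 < k.
Hypothesis f0 : f 0 = 0.
Hypothesis f_lip :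
  forall x y, 0 <= x -> 0 <= y -> `|f x - f y| <= k * `|x - y|.
Hypothesis f_concave : forall x y a, 0 <= x -> 0 <= y -> 0 <= a <= 1 ->
  a * f x + (1 - a) * f y <= f (a * x + (1 - a) * y).
Variable x1 : R.
Hypotheses (x1_gt0 : 0 < x1) (fx1_lt0 : f x1 < 0).

Let f_lip_le x y : 0 <= x -> x <= y ->
  f x - k * (y - x) <= f y /\ f y - k * (y - x) <= f x.
Proof.
move=> x0 xy; have := f_lip x y x0 (le_trans x0 xy).
rewrite distrC (distrC x) (ger0_norm (_ : 0 <= y - x)) ?subr_ge0 //.
by rewrite ler_norml => /andP[]; split; lra.
Qed.

(* By concavity and f 0 = 0, f stays negative beyond a point where it is. *)
Lemma neg_beyond x : x1 <= x -> f x < 0.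
Proof.
move=> x1x; have x_gt0 : 0 < x := lt_le_trans x1_gt0 x1x.
pose a := x1 / x.
have a01 : 0 <= a <= 1.
  by rewrite /a divr_ge0 ?(ltW x1_gt0) ?(ltW x_gt0) //= ler_pdivrMr // mul1r.
have := f_concave x 0 a (ltW x_gt0) (lexx 0) a01.
rewrite f0 !mulr0 !addr0 (mulfVK (lt0r_neq0 x_gt0)) => fx1_ge.
by rewrite -(pmulr_rlt0 _ (divr_gt0 x1_gt0 x_gt0)) (le_lt_trans fx1_ge).
Qed.

Lemma largest_nonneg_point : exists z, [/\ 0 <= z, f z = 0 &
  forall x, 0 <= x -> 0 <= f x -> x <= z].
Proof.
pose Z := [set x : R | 0 <= x /\ 0 <= f x].
have Z0 : Z 0 by split; rewrite ?f0.
have Z_le_x1 x : Z x -> x <= x1.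
  by move=> [_ fx_ge0]; rewrite leNgt; apply/negP => /ltW/neg_beyond; lra.
have supZ : has_sup Z by split; [exists 0 | exists x1].
have z0 : 0 <= sup Z := sup_upper_bound supZ Z0.
have fz_ge0 : 0 <= f (sup Z).
  rewrite leNgt; apply/negP => fz_lt0.
  have e_gt0 : 0 < - f (sup Z) / k by rewrite divr_gt0 // oppr_gt0.
  have [x [x0 fx0] xz] := sup_adherent e_gt0 supZ.
  have [fz_ge _] := f_lip_le x (sup Z) x0 (sup_upper_bound supZ (conj x0 fx0)).
  have gap_small : k * (sup Z - x) < - f (sup Z).
    by rewrite -ltr_pdivlMl // mulrC; lra.
  lra.
have fz_le0 : f (sup Z) <= 0.
  rewrite leNgt; apply/negP => fz_gt0.
  pose d := f (sup Z) / k.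
  have d_gt0 : 0 < d by rewrite divr_gt0.
  have zd : sup Z <= sup Z + d by lra.
  have [fzd _] := f_lip_le (sup Z) (sup Z + d) z0 zd.
  have kd : k * (sup Z + d - sup Z) = f (sup Z).
    by rewrite addrC addKr /d mulrC divfK // lt0r_neq0.
  have : Z (sup Z + d) by split; lra.
  by move/(sup_upper_bound supZ); lra.
exists (sup Z); split => //; first lra.
by move=> x x0 fx0; apply: sup_upper_bound.
Qed.

End LargestNonnegPoint.

Section NonnegIntegrals.
Context {d} {T : measurableType d} {R : realType}.
Variables (mu : {measure set T -> \bar R}) (D : set T).
Hypothesis mD : measurable D.

Lemma le_integral_real {f g : T -> R} :
  measurable_fun D f -> measurable_fun D g ->
  (forall t, D t -> 0 <= f t <= g t) ->
  (\int[mu]_(t in D) (f t)%:E <= \int[mu]_(t in D) (g t)%:E)%E.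
Proof.
move=> mf mg fg; apply: ge0_le_integral => //.
- by move=> t /fg /andP[f0 _]; rewrite lee_fin.
- exact/measurable_EFinP.
- exact/measurable_EFinP.
- by move=> t /fg /andP[_ fg_t]; rewrite lee_fin.
Qed.

Lemma integral_lincomb {f g : T -> R} (a b : R) :
  measurable_fun D f -> measurable_fun D g ->
  (forall t, D t -> 0 <= f t) -> (forall t, D t -> 0 <= g t) ->
  0 <= a -> 0 <= b ->
  (\int[mu]_(t in D) (a * f t + b * g t)%:E =
   a%:E * \int[mu]_(t in D) (f t)%:E + b%:E * \int[mu]_(t in D) (g t)%:E)%E.
Proof.
move=> mf mg f0 g0 a0 b0.
have mEf : measurable_fun D (fun t => (f t)%:E) by exact/measurable_EFinP.
have mEg : measurable_fun D (fun t => (g t)%:E) by exact/measurable_EFinP.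
have Ef0 t : D t -> (0 <= (f t)%:E)%E by move/f0; rewrite lee_fin.
have Eg0 t : D t -> (0 <= (g t)%:E)%E by move/g0; rewrite lee_fin.
under eq_integral do rewrite EFinD !EFinM.
rewrite ge0_integralD //.
- by rewrite !ge0_integralZl_EFin.
- by move=> t /f0 ft0; rewrite mule_ge0 ?lee_fin.
- exact: emeasurable_funM.
- by move=> t /g0 gt0; rewrite mule_ge0 ?lee_fin.
- exact: emeasurable_funM.
Qed.

Lemma le_integral_lincomb {h f g : T -> R} (a b : R) :
  measurable_fun D h -> measurable_fun D f -> measurable_fun D g ->
  (forall t, D t -> 0 <= f t) -> (forall t, D t -> 0 <= g t) ->
  0 <= a -> 0 <= b -> (forall t, D t -> 0 <= h t <= a * f t + b * g t) ->
  (\int[mu]_(t in D) (h t)%:E <=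
   a%:E * \int[mu]_(t in D) (f t)%:E + b%:E * \int[mu]_(t in D) (g t)%:E)%E.
Proof.
move=> mh mf mg f0 g0 a0 b0 hfg; rewrite -integral_lincomb //.
apply: le_integral_real => //.
by apply: measurable_funD; apply: measurable_funM => //; exact: measurable_cst.
Qed.

Lemma ge_integral_lincomb {h f g : T -> R} (a b : R) :
  measurable_fun D h -> measurable_fun D f -> measurable_fun D g ->
  (forall t, D t -> 0 <= f t) -> (forall t, D t -> 0 <= g t) ->
  0 <= a -> 0 <= b -> (forall t, D t -> a * f t + b * g t <= h t) ->
  (a%:E * \int[mu]_(t in D) (f t)%:E + b%:E * \int[mu]_(t in D) (g t)%:E <=
   \int[mu]_(t in D) (h t)%:E)%E.
Proof.
move=> mh mf mg f0 g0 a0 b0 hfg; rewrite -integral_lincomb //.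
apply: le_integral_real => //.
- by apply: measurable_funD; apply: measurable_funM => //; exact: measurable_cst.
- by move=> t Dt; rewrite hfg // addr_ge0 // mulr_ge0 // ?f0 ?g0.
Qed.

Lemma integral_full_set (f : T -> \bar R) : mu (~` D) = 0%E ->
  measurable_fun setT f -> (\int[mu]_t f t = \int[mu]_(t in D) f t)%E.
Proof.
move=> DC0 mf; rewrite -(setUv D) integral_setU //; last 3 first.
- exact: measurableC.
- by rewrite setUv.
- by rewrite disj_set2E setICr.
rewrite [X in (_ + X)%E]null_set_integral ?adde0 //.
- exact: measurableC.
- exact: measurable_funS mf.
Qed.

End NonnegIntegrals.

Section MeasureContinuity.
Context {d} {T : measurableType d} {R : realType} (P : probability T R).
Variable F : (set T)^nat.
Hypothesis mF : forall n, measurable (F n).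

Lemma ge_measure_bigcap (x : \bar R) : nonincreasing_seq F ->
  (forall n, (x <= P (F n))%E) -> (x <= P (\bigcap_n F n))%E.
Proof.
move=> F_dec x_le.
have F0_fin := le_lt_trans (probability_le1 P (mF 0%N)) (ltey 1%E).
have cvgF := nonincreasing_cvg_mu F0_fin mF (bigcapT_measurable mF) F_dec.
rewrite -(cvg_lim (@ereal_hausdorff R) cvgF).
by apply: lime_ge; [exact: cvgP cvgF | exact: nearW].
Qed.

Lemma le_measure_bigcup (x : \bar R) : nondecreasing_seq F ->
  (forall n, (P (F n) <= x)%E) -> (P (\bigcup_n F n) <= x)%E.
Proof.
move=> F_inc le_x.
have cvgF := nondecreasing_cvg_mu (mu := P) mF (bigcupT_measurable _ mF) F_inc.
rewrite -(cvg_lim (@ereal_hausdorff R) cvgF).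
by apply: lime_le; [exact: cvgP cvgF | exact: nearW].
Qed.

End MeasureContinuity.

Section HalfLines.
Context {R : realType}.

Lemma measurable_ge (a : R) : measurable [set t : R | a <= t].
Proof.
rewrite (_ : [set t | a <= t] = [set` `[a, +oo[%R]); first exact: measurable_itv.
by apply/seteqP; split=> x; rewrite /= in_itv /= andbT.
Qed.

Lemma measurable_gt (a : R) : measurable [set t : R | a < t].
Proof.
rewrite (_ : [set t | a < t] = [set` `]a, +oo[%R]); first exact: measurable_itv.
by apply/seteqP; split=> x; rewrite /= in_itv /= andbT.
Qed.

Lemma vanishing_tail (P : probability R R) (e : R) : 0 < e ->
  exists n : nat, (P [set t : R | (n%:R < t)%R] < e%:E)%E.
Proof.
move=> e_gt0; apply: contrapT => no_small_tail.
have tail_ge n : (e%:E <= P [set t : R | (n%:R < t)%R])%E.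
  by rewrite leNgt; apply/negP => tail_lt; apply: no_small_tail; exists n.
have tail_dec : nonincreasing_seq (fun n : nat => [set t : R | n%:R < t]).
  move=> n m nm; apply/subsetPset => t /=; apply: le_lt_trans.
  by rewrite ler_nat.
have := ge_measure_bigcap P _ (fun n => measurable_gt _) _ tail_dec tail_ge.
rewrite (_ : \bigcap_n _ = set0) ?measure0 ?lee_fin; first lra.
apply/seteqP; split => // t /= t_large.
have := t_large (Num.truncn t).+1 I; have := truncnS_gt t => /=; lra.
Qed.

End HalfLines.

Section TruncatedMean.
Context {R : realType}.
Variable P : probability R R.
Hypothesis supp : P [set t : R | 0 <= t] = 1%E.

Let D := [set t : R | 0 <= t].
Let mD : measurable D := measurable_ge 0.

Let measurable_min (s : R) : measurable_fun D (fun t => Num.min t s).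
Proof. by apply: measurable_minr; [exact: measurable_id | exact: measurable_cst]. Qed.

Let min_ge0 s t : 0 <= s -> D t -> 0 <= Num.min t s.
Proof. by move=> s0 t0; rewrite le_min t0 s0. Qed.

Let indic_pred (p : pred R) t : \1_[set x | p x] t = (if p t then 1 else 0 : R).
Proof.
rewrite indicE; case: ifPn => pt; first by rewrite mem_set.
by rewrite memNset //=; apply/negP.
Qed.

Let integral_cst1 (c : R) : (\int[P]_(t in D) c%:E = c%:E)%E.
Proof. by have := integral_cst P mD c%:E; rewrite /= supp mule1. Qed.

Let integral_tail (E : set R) : measurable E -> E `<=` D ->
  (\int[P]_(t in D) (\1_E t)%:E = P E)%E.
Proof. by move=> mE ED; rewrite integral_indic // setIidl. Qed.

(* The mean of P truncated at level s >= 0, i.e. E_P[min(t, s)], computed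
   on the support [0, +oo) where the integrand is nonnegative and bounded. *)
Definition trunc_mean (s : R) : R := fine (\int[P]_(t in D) (Num.min t s)%:E).

Let integral_min_bounds s : 0 <= s ->
  (0 <= \int[P]_(t in D) (Num.min t s)%:E <= s%:E)%E.
Proof.
move=> s0; apply/andP; split.
  by apply: integral_ge0 => t t0; rewrite lee_fin min_ge0.
rewrite -(integral_cst1 s).
apply: (le_integral_real P D mD (measurable_min s) (measurable_cst s)) => t t0.
by rewrite min_ge0 //= ge_min lexx orbT.
Qed.

Lemma trunc_meanE s : 0 <= s ->
  (\int[P]_(t in D) (Num.min t s)%:E)%E = (trunc_mean s)%:E.
Proof.
move=> s0; have /andP[int_ge0 int_le] := integral_min_bounds s s0.
by rewrite fineK // ge0_fin_numE // (le_lt_trans int_le (ltey _)).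
Qed.

Lemma trunc_mean_bounds {s : R} : 0 <= s -> 0 <= trunc_mean s <= s.
Proof. by move=> s0; rewrite -!lee_fin -trunc_meanE // integral_min_bounds. Qed.

Let P_negative : P (~` D) = 0%E.
Proof. by rewrite probability_setC // supp subee. Qed.

Lemma G_PC_trunc_mean C mu : G_PC P C mu = trunc_mean (C * mu) - mu.
Proof.
rewrite /G_PC (integral_full_set P D mD) //.
by apply/measurable_EFinP; apply: measurable_minr;
  [exact: measurable_id | exact: measurable_cst].
Qed.

Lemma trunc_mean_le_mean {s : R} : 0 <= s -> ((trunc_mean s)%:E <= meanP P)%E.
Proof.
move=> s0; rewrite -trunc_meanE // /meanP (integral_full_set P D mD) //.
  apply: (le_integral_real P D mD (measurable_min s)); first exact: measurable_id.
  by move=> t t0; rewrite min_ge0 //= ge_min lexx.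
Qed.

Lemma trunc_mean_incr {s s' : R} : 0 <= s -> s <= s' ->
  trunc_mean s <= trunc_mean s' <= trunc_mean s + (s' - s).
Proof.
move=> s0 ss'; have s'0 : 0 <= s' := le_trans s0 ss'.
rewrite -!lee_fin EFinD -!trunc_meanE //; apply/andP; split.
  apply: (le_integral_real P D mD (measurable_min s) (measurable_min s')).
  by move=> t t0; rewrite min_ge0 //= le_min ge_min lexx ge_min ss' orbT.
have := le_integral_lincomb P D mD 1 (s' - s) (measurable_min s')
  (measurable_min s) (measurable_cst (1 : R)).
rewrite integral_cst1 mul1e mule1; apply => //.
- by move=> t t0; rewrite min_ge0.
- by rewrite subr_ge0.
- move=> t t0; rewrite min_ge0 //= mul1r mulr1.
  by case: (leP t s) => ts; case: (leP t s') => ts'; lra.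
Qed.

(* s |-> E[min(t, s)] is concave on [0, +oo), since each s |-> min(t, s) is. *)
Lemma trunc_mean_concave {x y a : R} : 0 <= x -> 0 <= y -> 0 <= a <= 1 ->
  a * trunc_mean x + (1 - a) * trunc_mean y <= trunc_mean (a * x + (1 - a) * y).
Proof.
move=> x0 y0 /andP[a0 a1]; have a'0 : 0 <= 1 - a by rewrite subr_ge0.
have z0 : 0 <= a * x + (1 - a) * y by rewrite addr_ge0 // mulr_ge0.
rewrite -lee_fin EFinD !EFinM -!trunc_meanE //.
apply: (ge_integral_lincomb P D mD a (1 - a) (measurable_min _)
  (measurable_min x) (measurable_min y)) => //.
- by move=> t t0; rewrite min_ge0.
- by move=> t t0; rewrite min_ge0.
- move=> t _.
  have [mx_t mx_x] : Num.min t x <= t /\ Num.min t x <= x.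
    by split; rewrite ge_min lexx ?orbT.
  have [my_t my_y] : Num.min t y <= t /\ Num.min t y <= y.
    by split; rewrite ge_min lexx ?orbT.
  rewrite le_min; apply/andP; split; nra.
Qed.

Lemma trunc_mean_tail_upper {a s : R} : 0 <= a -> a <= s ->
  ((trunc_mean s)%:E <= (trunc_mean a)%:E + (s - a)%:E * P [set t | (a < t)%R])%E.
Proof.
move=> a0 as_; have s0 : 0 <= s := le_trans a0 as_.
rewrite -!trunc_meanE // -(integral_tail _ (measurable_gt a)); last first.
  by move=> t /= /ltW; exact: le_trans.
rewrite -[X in (_ <= X + _)%E]mul1e.
apply: (le_integral_lincomb P D mD 1 (s - a) (measurable_min s)
  (measurable_min a) (measurable_indic (measurable_gt a))) => //.
- by move=> t t0; rewrite min_ge0.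
- by rewrite subr_ge0.
- move=> t t0; rewrite min_ge0 //= mul1r indic_pred.
  by case: (leP t s) => ts; case: (leP t a) => ta; case: (ltP a t) => at_; lra.
Qed.

Lemma trunc_mean_tail_lower {s m : R} : 0 <= s -> s <= m ->
  ((trunc_mean s)%:E + (m - s)%:E * P [set t | (m <= t)%R] <= (trunc_mean m)%:E)%E.
Proof.
move=> s0 sm; have m0 : 0 <= m := le_trans s0 sm.
rewrite -!trunc_meanE // -(integral_tail _ (measurable_ge m)); last first.
  by move=> t /=; exact: le_trans.
rewrite -[X in (X + _ <= _)%E]mul1e.
apply: (ge_integral_lincomb P D mD 1 (m - s) (measurable_min m)
  (measurable_min s) (measurable_indic (measurable_ge m))) => //.
- by move=> t t0; rewrite min_ge0.
- by rewrite subr_ge0.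
- move=> t t0; rewrite mul1r indic_pred.
  by case: (leP t s) => ts; case: (leP t m) => tm; case: (leP m t) => mt; lra.
Qed.

End TruncatedMean.

Section Median.
Context {R : realType}.
Variables (P : probability R R) (C : R).
Hypotheses (HC : 1 < C) (supp : P [set t : R | 0 <= t] = 1%E).

Let C_gt0 : 0 < C. Proof. exact: lt_trans HC. Qed.
Let invC_gt0 : 0 < C^-1. Proof. by rewrite invr_gt0. Qed.

Let m := median_PC P C.
Let S := [set M : R | 0 <= M /\ (C^-1%:E <= P [set t : R | (M <= t)%R])%E].

Let S0 : S 0.
Proof. by split => //; rewrite supp lee_fin invf_le1 //; exact: ltW. Qed.

Let le_P (A B : set R) : measurable A -> measurable B -> A `<=` B ->
  (P A <= P B)%E.
Proof. by move=> mA mB AB; apply: le_measure => //; rewrite inE. Qed.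

(* The set defining the median contains 0 and is bounded, since the tails
   of P eventually drop below 1/C. *)
Let S_has_sup : has_sup S.
Proof.
split; first by exists 0.
have [n tail_small] := vanishing_tail P _ invC_gt0.
exists n%:R => M [_ tail_M]; rewrite leNgt; apply/negP => nM.
have tailM_le : (P [set t | (M <= t)%R] <= P [set t | (n%:R < t)%R])%E.
  by apply: le_P; [exact: measurable_ge | exact: measurable_gt | move=> t /=; lra].
by have := le_lt_trans (le_trans tail_M tailM_le) tail_small; rewrite ltxx.
Qed.

Lemma median_ge0 : 0 <= median_PC P C.
Proof. exact: (sup_upper_bound S_has_sup S0). Qed.

(* P[t >= m_P] >= 1/C: the defining tail bound passes to the supremum. *)
Lemma median_tail_ge : (C^-1%:E <= P [set t : R | (m <= t)%R])%E.
Proof.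
pose F n := [set t : R | m - n.+1%:R^-1 <= t].
have F_dec : nonincreasing_seq F.
  move=> n k nk; apply/subsetPset => t /=; apply: le_trans.
  by rewrite lerD2l lerN2 lef_pV2 ?posrE ?ltr0Sn // ler_nat.
have F_ge n : (C^-1%:E <= P (F n))%E.
  have eps_gt0 : 0 < n.+1%:R^-1 :> R by rewrite invr_gt0.
  have [M [_ tail_M] M_close] := sup_adherent eps_gt0 S_has_sup.
  apply: le_trans tail_M _; apply: le_P; [exact: measurable_ge.. |].
  by move=> t /= Mt; apply: le_trans Mt; exact: ltW.
apply: le_trans (ge_measure_bigcap P F (fun n => measurable_ge _) _ F_dec F_ge) _.
apply: le_P; [exact: bigcapT_measurable (fun n => measurable_ge _) | exact: measurable_ge |].
move=> t /= t_ge; rewrite leNgt; apply/negP => /ltr_add_invr[n tn].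
by have := t_ge n I; rewrite /F /= lerBlDr leNgt tn.
Qed.

(* P[t > m_P] <= 1/C: beyond the supremum the defining tail bound fails. *)
Lemma median_tail_gt : (P [set t : R | (m < t)%R] <= C^-1%:E)%E.
Proof.
pose F n := [set t : R | m + n.+1%:R^-1 <= t].
have F_inc : nondecreasing_seq F.
  move=> n k nk; apply/subsetPset => t /=; apply: le_trans.
  by rewrite lerD2l lef_pV2 ?posrE ?ltr0Sn // ler_nat.
have F_le n : (P (F n) <= C^-1%:E)%E.
  rewrite leNgt; apply/negP => /ltW tail_ge.
  have SF : S (m + n.+1%:R^-1) by split; rewrite ?addr_ge0 ?median_ge0.
  by have := sup_upper_bound S_has_sup SF; rewrite gerDl leNgt invr_gt0 ltr0Sn.
apply: le_trans (le_measure_bigcup P F (fun n => measurable_ge _) _ F_inc F_le).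
apply: le_P; [exact: measurable_gt | exact: bigcupT_measurable (fun n => measurable_ge _) |].
by move=> t /= /ltr_add_invr[n tn]; exists n => //; rewrite /F /= ltW.
Qed.

(* s |-> E[min(t, s)] - s / C is maximal at s = m_P: its slope is
   P[t > s] - 1/C, which changes sign at the median. *)
Lemma trunc_mean_peak {s : R} : 0 <= s ->
  trunc_mean P s - s / C <= trunc_mean P m - m / C.
Proof.
move=> s0; have m0 : 0 <= m := median_ge0.
have [ms|sm] := leP m s.
  have ds0 : (0 <= (s - m)%:E)%E by rewrite lee_fin subr_ge0.
  have := le_trans (trunc_mean_tail_upper P supp m0 ms)
    (leeD2l _ (lee_wpmul2l ds0 median_tail_gt)).
  by rewrite -EFinM -EFinD lee_fin mulrBl; lra.
have ds0 : (0 <= (m - s)%:E)%E by rewrite lee_fin subr_ge0 ltW.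
have := le_trans (leeD2l _ (lee_wpmul2l ds0 median_tail_ge))
  (trunc_mean_tail_lower P supp s0 (ltW sm)).
by rewrite -EFinM -EFinD lee_fin mulrBl; lra.
Qed.

End Median.

Section ClippingFunction.
Context {R : realType}.
Variables (P : probability R R) (C : R).
Hypotheses (HC : 1 < C) (supp : P [set t : R | 0 <= t] = 1%E).

Let C_gt0 : 0 < C. Proof. exact: lt_trans HC. Qed.
Let G := G_PC P C.
Let Gtrunc := G_PC_trunc_mean P supp C.

Lemma G_PC0 : G 0 = 0.
Proof.
rewrite /G Gtrunc mulr0 subr0.
by have /andP[T0_ge T0_le] := trunc_mean_bounds P supp (lexx 0); apply/le_anti/andP.
Qed.

Lemma G_PC_lipschitz x y : 0 <= x -> 0 <= y -> `|G x - G y| <= (C + 1) * `|x - y|.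
Proof.
wlog xy : x y / x <= y => [W x0 y0|x0 y0].
  have [xy|yx] := leP x y; first exact: W.
  by rewrite distrC (distrC x); apply: W => //; exact: ltW.
have Cx0 : 0 <= C * x by rewrite mulr_ge0 // ltW.
have Cxy : C * x <= C * y by rewrite ler_pM2l.
have := trunc_mean_incr P supp Cx0 Cxy.
rewrite /G !Gtrunc (distrC x) (ger0_norm (_ : 0 <= y - x)) ?subr_ge0 //.
rewrite ler_norml.
by rewrite mulrDl mul1r mulrBr => /andP[? ?]; apply/andP; split; lra.
Qed.

Lemma G_PC_concave x y a : 0 <= x -> 0 <= y -> 0 <= a <= 1 ->
  a * G x + (1 - a) * G y <= G (a * x + (1 - a) * y).
Proof.
move=> x0 y0 a01.
have := trunc_mean_concave P supp (mulr_ge0 (ltW C_gt0) x0) (mulr_ge0 (ltW C_gt0) y0) a01.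
have -> : a * (C * x) + (1 - a) * (C * y) = C * (a * x + (1 - a) * y) by ring.
by rewrite /G !Gtrunc !mulrBr; lra.
Qed.

Lemma G_PC_max mu : 0 <= mu -> G mu <= G (C^-1 * median_PC P C).
Proof.
move=> mu0; have := trunc_mean_peak P C HC supp (mulr_ge0 (ltW C_gt0) mu0).
have CC : C != 0 := lt0r_neq0 C_gt0.
rewrite /G !Gtrunc mulrA divff // mul1r.
have -> : C * mu / C = mu by rewrite mulrC mulKf.
rewrite [_ / C]mulrC; lra.
Qed.

(* G eventually becomes negative: E[min(t, C mu)] grows like mu / 2 at most,
   once the tail P[t > K] is below 1/(2C). *)
Lemma G_PC_eventually_neg : exists2 mu, 0 < mu & G mu < 0.
Proof.
have e_gt0 : 0 < (2 * C)^-1 by rewrite invr_gt0 mulr_gt0.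
have [n tail_small] := vanishing_tail P _ e_gt0.
pose K : R := n%:R; have K0 : 0 <= K by rewrite ler0n.
pose mu := 2 * K + 1; have mu_gt0 : 0 < mu by rewrite /mu; lra.
have Kmu : K <= C * mu.
  by apply: le_trans (ler_peMl (ltW mu_gt0) (ltW HC)); rewrite /mu; lra.
have dK0 : (0 <= (C * mu - K)%:E)%E by rewrite lee_fin subr_ge0.
have := le_trans (trunc_mean_tail_upper P supp K0 Kmu)
  (leeD2l _ (lee_wpmul2l dK0 (ltW tail_small))).
rewrite -EFinM -EFinD lee_fin => T_le.
have /andP[_ TK_le] := trunc_mean_bounds P supp K0.
have half : C * mu * (2 * C)^-1 = mu / 2.
  by field; rewrite lt0r_neq0.
have Ke_ge0 : 0 <= K * (2 * C)^-1 by rewrite mulr_ge0 // ltW.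
exists mu => //; rewrite /G Gtrunc; move: T_le; rewrite mulrBl half /mu; lra.
Qed.

Lemma G_PC_nonneg_le_mean mu : 0 <= mu -> 0 <= G mu -> (mu%:E <= meanP P)%E.
Proof.
move=> mu0; rewrite /G Gtrunc subr_ge0 => mu_le.
apply: (le_trans _ (trunc_mean_le_mean P supp (mulr_ge0 (ltW C_gt0) mu0))).
by rewrite lee_fin.
Qed.

End ClippingFunction.

Theorem mainTheorem15 (R : realType) (P : probability R R) (C : R)
  (HC : 1 < C) (Hsupp : P [set t : R | 0 <= t] = 1%E) :
  (* (1) continuity and concavity of G on [0, +oo) *)
  ({within [set mu : R | 0 <= mu], continuous (G_PC P C)} /\
   (forall x y a : R, 0 <= x -> 0 <= y -> 0 <= a <= 1 ->
      a * G_PC P C x + (1 - a) * G_PC P C y <= G_PC P C (a * x + (1 - a) * y)))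
  /\
  (* (2) sup_{mu >= 0} G(mu) = G(m_P / C) *)
  sup [set G_PC P C mu | mu in [set mu : R | 0 <= mu]]
    = G_PC P C (C^-1 * median_PC P C)
  /\
  (* (3) the C-clipped mean (largest mu >= 0 with G(mu) = 0) exists and
         satisfies m_P / C <= mu_{P,C} <= mu_P *)
  (exists muc : R,
      [/\ 0 <= muc, G_PC P C muc = 0,
          (forall mu : R, 0 <= mu -> G_PC P C mu = 0 -> mu <= muc),
          C^-1 * median_PC P C <= muc
        & lee muc%:E (meanP P)]).
Proof.
have k_gt0 : 0 < C + 1 by apply: addr_gt0; [exact: lt_trans HC | exact: ltr01].
have G_lip := G_PC_lipschitz P C HC Hsupp.
have G_conc := G_PC_concave P C HC Hsupp.
have G_max := G_PC_max P C HC Hsupp.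
have peak0 : 0 <= C^-1 * median_PC P C.
  by rewrite mulr_ge0 ?invr_ge0 ?(median_ge0 P C HC Hsupp) // ltW // (lt_trans ltr01 HC).
split; first by split; [exact: lipschitz_within_continuous _ _ _ k_gt0 G_lip | exact: G_conc].
split.
  by apply: sup_attained; [exists (C^-1 * median_PC P C) | move=> _ [mu mu0 <-]; exact: G_max].
have [mu1 mu1_gt0 G_neg] := G_PC_eventually_neg P C HC Hsupp.
have [z [z0 Gz0 z_largest]] :=
  largest_nonneg_point _ _ k_gt0 (G_PC0 P C Hsupp) G_lip G_conc _ mu1_gt0 G_neg.
exists z; split => //.
- by move=> mu mu0 Gmu0; apply: z_largest; rewrite ?Gmu0.
- by apply: z_largest => //; rewrite -(G_PC0 P C Hsupp); exact: G_max.
- by apply: (G_PC_nonneg_le_mean P C HC Hsupp z z0); rewrite Gz0.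
Qed.
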